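(* Let $\left|\psi\right\rangle$ be a pure three-qubit state of parties $A,B,C$. For $X\in\{A,B,C\}$ define $$E^X_{LOCC}(\left|\psi\right\rangle)=\max\sum_{i=0}^1p_i\,E(|\psi_i\rangle),$$ where the maximum is over all orthonormal bases $\{|x_0\rangle,|x_1\rangle\}$ of party $X$'s qubit, $p_i=\|(\langle x_i|_X\otimes I)\left|\psi\right\rangle\|^2$, $|\psi_i\rangle=p_i^{-1/2}(\langle x_i|_X\otimes I)\left|\psi\right\rangle$ is the resulting pure state of the two remaining qubits, and $E$ is the entanglement entropy (von Neumann entropy, base 2, of either one-qubit reduced state). Let $E_{LOCC}(\left|\psi\right\rangle)=\max\{E^A_{LOCC},E^B_{LOCC},E^C_{LOCC}\}$. Then $$E_{MB}(\left|\psi\right\rangle)\ \ge\ E_{LOCC}(\left|\psi\right\rangle),$$ i.e. the entanglement measurement bound of a pure tripartite qubit state does not increase on average under a complete local projective measurement of one party.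
   Context: Entanglement measurement bound (EMB). Let $\left|\psi\right\rangle$ be a unit vector in $\mathcal{H}_1\otimes\cdots\otimes\mathcal{H}_N$, $\mathcal{H}_j=\mathbb{C}^{d_j}$. An adaptive local measurement scheme consists of: an ordering $\pi$ of the parties $\{1,\dots,N\}$; an orthonormal basis $\{|\phi^{(1)}_{i_1}\rangle\}_{i_1}$ of $\mathcal{H}_{\pi(1)}$; and, for each $k=2,\dots,N$ and each outcome history $(i_1,\dots,i_{k-1})$, an orthonormal basis $\{|\phi^{(k)}_{i_k|i_1\dots i_{k-1}}\rangle\}_{i_k}$ of $\mathcal{H}_{\pi(k)}$ (which may depend on the history). Its outcome distribution is $p_{i_1\dots i_N}=\big|\big(\langle\phi^{(1)}_{i_1}|\otimes\langle\phi^{(2)}_{i_2|i_1}|\otimes\cdots\otimes\langle\phi^{(N)}_{i_N|i_1\dots i_{N-1}}|\big)\left|\psi\right\rangle\big|^2$, where the $k$-th bra acts on the tensor factor of party $\pi(k)$. The EMB is $E_{MB}(\left|\psi\right\rangle)=\min H(\mathbf{p})$, where $H(\mathbf{p})=-\sum p_{i_1\dots i_N}\log_2 p_{i_1\dots i_N}$ is the Shannon entropy and the minimum is over all adaptive local measurement schemes (including all orderings of the parties). *)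

From Stdlib Require Import Reals.
Open Scope R_scope.

Definition C := (R * R)%type.
Definition C0 : C := (0, 0).
Definition Cadd (z w : C) : C := (fst z + fst w, snd z + snd w).
Definition Cmul (z w : C) : C :=
  (fst z * fst w - snd z * snd w, fst z * snd w + snd z * fst w).
Definition Cconj (z : C) : C := (fst z, - snd z).
Definition Cscale (r : R) (z : C) : C := (r * fst z, r * snd z).
Definition Cnorm2 (z : C) : R := fst z * fst z + snd z * snd z.

Definition Csum2 (f : bool -> C) : C := Cadd (f false) (f true).
Definition Rsum2 (f : bool -> R) : R := f false + f true.

Definition qubit := bool -> C.
Definition state3 := bool -> bool -> bool -> C.  (* psi a b c, parties A,B,C *)
Definition state2 := bool -> bool -> C.

Definition inner (u v : qubit) : C := Csum2 (fun k => Cmul (Cconj (u k)) (v k)).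

Definition orthonormal_basis (x : bool -> qubit) : Prop :=
  forall i j, inner (x i) (x j) = (if Bool.eqb i j then (1, 0) else C0).

Definition is_unit3 (psi : state3) : Prop :=
  Rsum2 (fun a => Rsum2 (fun b => Rsum2 (fun c => Cnorm2 (psi a b c)))) = 1.

(* x log2 x, with the convention 0 log 0 = 0 *)
Definition xlog2x (x : R) : R := if Rle_dec x 0 then 0 else x * (ln x / ln 2).

Definition shannon3 (p : bool -> bool -> bool -> R) : R :=
  - Rsum2 (fun i => Rsum2 (fun j => Rsum2 (fun k => xlog2x (p i j k)))).

Definition rho (phi : state2) (j j' : bool) : C :=
  Csum2 (fun k => Cmul (phi j k) (Cconj (phi j' k))).

(* The eigenvalues of the Hermitian 2x2 matrix rho are the two roots of its
   characteristic polynomial x^2 - tr(rho) x + det(rho). *)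
Definition rho_tr (phi : state2) : R := fst (rho phi false false) + fst (rho phi true true).
Definition rho_det (phi : state2) : R :=
  fst (Cadd (Cmul (rho phi false false) (rho phi true true))
            (Cscale (-1) (Cmul (rho phi false true) (rho phi true false)))).
Definition rho_eig (phi : state2) (s : bool) : R :=
  (rho_tr phi + (if s then 1 else -1) *
     sqrt (rho_tr phi * rho_tr phi - 4 * rho_det phi)) / 2.

Definition ent_entropy (phi : state2) : R :=
  - Rsum2 (fun s => xlog2x (rho_eig phi s)).

Inductive party := PA | PB | PC.

Definition party_eqb (X Y : party) : bool :=
  match X, Y with PA, PA | PB, PB | PC, PC => true | _, _ => false end.

Definition amp3 (psi : state3) (fA fB fC : qubit) : C :=
  Csum2 (fun a => Csum2 (fun b => Csum2 (fun c =>
    Cmul (Cconj (fA a)) (Cmul (Cconj (fB b)) (Cmul (Cconj (fC c)) (psi a b c)))))).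

Record scheme := Scheme {
  ord1 : party; ord2 : party; ord3 : party;
  bas1 : bool -> qubit;
  bas2 : bool -> bool -> qubit;                  (* phi^(2)_{i2 | i1}: bas2 i1 i2 *)
  bas3 : bool -> bool -> bool -> qubit           (* phi^(3)_{i3 | i1 i2}: bas3 i1 i2 i3 *)
}.

Definition valid_scheme (s : scheme) : Prop :=
  ord1 s <> ord2 s /\ ord1 s <> ord3 s /\ ord2 s <> ord3 s /\
  orthonormal_basis (bas1 s) /\
  (forall i1, orthonormal_basis (bas2 s i1)) /\
  (forall i1 i2, orthonormal_basis (bas3 s i1 i2)).

Definition scheme_vec (s : scheme) (i1 i2 i3 : bool) (X : party) : qubit :=
  if party_eqb X (ord1 s) then bas1 s i1
  else if party_eqb X (ord2 s) then bas2 s i1 i2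
  else bas3 s i1 i2 i3.

Definition scheme_prob (psi : state3) (s : scheme) (i1 i2 i3 : bool) : R :=
  Cnorm2 (amp3 psi (scheme_vec s i1 i2 i3 PA) (scheme_vec s i1 i2 i3 PB)
                   (scheme_vec s i1 i2 i3 PC)).

(* H(p) for the outcome distribution of scheme s; E_MB is its minimum over s *)
Definition scheme_entropy (psi : state3) (s : scheme) : R :=
  shannon3 (scheme_prob psi s).

(* unnormalized post-measurement state (<x|_X ⊗ I)|psi> of the remaining two
   qubits (kept in their natural order) *)
Definition post_state (psi : state3) (X : party) (x : qubit) : state2 :=
  match X with
  | PA => fun j k => Csum2 (fun a => Cmul (Cconj (x a)) (psi a j k))
  | PB => fun j k => Csum2 (fun b => Cmul (Cconj (x b)) (psi j b k))
  | PC => fun j k => Csum2 (fun c => Cmul (Cconj (x c)) (psi j k c))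
  end.

Definition post_prob (psi : state3) (X : party) (x : qubit) : R :=
  Rsum2 (fun j => Rsum2 (fun k => Cnorm2 (post_state psi X x j k))).

(* p * E(psi_x), with psi_x = p^{-1/2} (<x|_X ⊗ I)|psi>; the term is 0 when p = 0 *)
Definition weighted_term (psi : state3) (X : party) (x : qubit) : R :=
  let p := post_prob psi X x in
  if Req_EM_T p 0 then 0
  else p * ent_entropy (fun j k => Cscale (/ sqrt p) (post_state psi X x j k)).

(* sum_i p_i E(psi_i) for the basis {x_0, x_1} of party X;
   E^X_LOCC is its maximum over bases, E_LOCC the max over X *)
Definition locc_average (psi : state3) (X : party) (x : bool -> qubit) : R :=
  Rsum2 (fun i => weighted_term psi X (x i)).

From Pilot Require Import Defs.
From Stdlib Require Import Reals Lra Psatz List Classical.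
Open Scope R_scope.

(* Relabel the parties so that the LOCC-measured party X comes first, and let
   rhoB be the reduced state of the party that now comes second, with Bloch
   length r, so that its largest eigenvalue is lam = (1 + r) / 2.  Both sides
   of the inequality are compared with the binary entropy h(lam).

   - LOCC side: p_i E(psi_i) is the unnormalised entropy [qubit_entropy] of
     the second party's post-measurement state, and these two states sum to
     rhoB.  The Bloch length is a norm (triangle inequality) and the
     unnormalised entropy is superadditive and decreasing in the Bloch length,
     so sum_i p_i E(psi_i) <= h(lam).
   - Measurement side: by Cauchy-Schwarz, every outcome probability of every
     adaptive scheme is at most <g| rhoB |g> <= lam, where g is the vector
     applied to that party; the outcome probabilities sum to 1 (Parseval).
     A distribution whose weights are all at most lam >= 1/2 has entropy at
     least h(lam). *)

Definition xlnx (x : R) : R := if Rle_dec x 0 then 0 else x * ln x.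

Lemma xlnx_pos x : 0 < x -> xlnx x = x * ln x.
Proof. intro H. unfold xlnx. destruct (Rle_dec x 0); [lra | reflexivity]. Qed.

Lemma xlnx_nonpos x : x <= 0 -> xlnx x = 0.
Proof. intro H. unfold xlnx. destruct (Rle_dec x 0); [reflexivity | lra]. Qed.

Lemma ln2_pos : 0 < ln 2.
Proof. pose proof ln_lt_2. lra. Qed.

Lemma xlog2x_xlnx x : xlog2x x = xlnx x / ln 2.
Proof.
  pose proof ln2_pos. unfold xlog2x, xlnx.
  destruct (Rle_dec x 0); field; lra.
Qed.

Lemma ln_ge_1_minus_inv u : 0 < u -> 1 - / u <= ln u.
Proof.
  intro Hu. assert (Hinv : 0 < / u) by (apply Rinv_0_lt_compat; lra).
  pose proof (exp_ineq1_le (ln (/ u))) as H. rewrite exp_ln in H by exact Hinv.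
  rewrite ln_Rinv in H by lra. lra.
Qed.

Lemma ln_le x y : 0 < x -> x <= y -> ln x <= ln y.
Proof. intros Hx [Hxy | ->]; [left; apply ln_increasing | right]; auto. Qed.

Lemma ln_div x y : 0 < x -> 0 < y -> ln (x / y) = ln x - ln y.
Proof.
  intros Hx Hy. unfold Rdiv.
  assert (0 < / y) by (apply Rinv_0_lt_compat; lra).
  rewrite ln_mult, ln_Rinv by lra. ring.
Qed.

Lemma xlnx_tangent x y : 0 < x -> 0 <= y -> xlnx x + (y - x) * (ln x + 1) <= xlnx y.
Proof.
  intros Hx [Hy | <-].
  - rewrite !xlnx_pos by lra.
    assert (Hln : 1 - x / y <= ln y - ln x).
    { replace (x / y) with (/ (y / x)) by (field; lra).
      rewrite <- ln_div by lra. apply ln_ge_1_minus_inv, Rdiv_lt_0_compat; lra. }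
    assert (y * (1 - x / y) = y - x) by (field; lra).
    assert (y * (1 - x / y) <= y * (ln y - ln x)) by (apply Rmult_le_compat_l; lra).
    nra.
  - rewrite xlnx_pos, (xlnx_nonpos 0) by lra. nra.
Qed.

Lemma xlnx_superadd a b : 0 <= a -> 0 <= b -> xlnx a + xlnx b <= xlnx (a + b).
Proof.
  intros [Ha | <-]; [| rewrite (xlnx_nonpos 0), !Rplus_0_l by lra; lra].
  intros [Hb | <-]; [| rewrite (xlnx_nonpos 0), !Rplus_0_r by lra; lra].
  rewrite !xlnx_pos by lra.
  assert (ln a <= ln (a + b)) by (apply ln_le; lra).
  assert (ln b <= ln (a + b)) by (apply ln_le; lra).
  nra.
Qed.

Lemma xlnx_spread a b d : 0 <= b -> b <= a -> 0 <= d -> d <= b ->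
  xlnx a + xlnx b <= xlnx (a + d) + xlnx (b - d).
Proof.
  intros [Hb | <-] Hab Hd Hdb.
  - pose proof (xlnx_tangent a (a + d) ltac:(lra) ltac:(lra)).
    pose proof (xlnx_tangent b (b - d) ltac:(lra) ltac:(lra)).
    assert (ln b <= ln a) by (apply ln_le; lra).
    nra.
  - replace d with 0 by lra. rewrite Rplus_0_r, Rminus_0_r. lra.
Qed.

Lemma xlnx_binary_ge x : 0 <= x <= 1 -> - ln 2 <= xlnx x + xlnx (1 - x).
Proof.
  intro Hx.
  pose proof (xlnx_tangent (/ 2) x ltac:(lra) ltac:(lra)).
  pose proof (xlnx_tangent (/ 2) (1 - x) ltac:(lra) ltac:(lra)).
  rewrite xlnx_pos, ln_Rinv in * by lra. lra.
Qed.

Lemma xlnx_le_half x : 0 <= x <= / 2 -> xlnx x <= - (x * ln 2).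
Proof.
  intros [[Hx | <-] Hx2].
  - rewrite xlnx_pos by lra.
    assert (ln x <= ln (/ 2)) by (apply ln_le; lra).
    rewrite ln_Rinv in * by lra. nra.
  - rewrite xlnx_nonpos by lra. lra.
Qed.

Definition sum_list (l : list R) : R := fold_right Rplus 0 l.
Definition sum_xlnx (l : list R) : R := fold_right (fun x s => xlnx x + s) 0 l.

Lemma sum_list_app l1 l2 : sum_list (l1 ++ l2) = sum_list l1 + sum_list l2.
Proof. unfold sum_list. induction l1 as [| a l IH]; simpl; lra. Qed.

Lemma sum_xlnx_app l1 l2 : sum_xlnx (l1 ++ l2) = sum_xlnx l1 + sum_xlnx l2.
Proof. unfold sum_xlnx. induction l1 as [| a l IH]; simpl; lra. Qed.

Lemma sum_list_nonneg l : (forall x, In x l -> 0 <= x) -> 0 <= sum_list l.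
Proof.
  induction l as [| a l IH]; simpl; intro Hl; [lra |].
  pose proof (Hl a (or_introl eq_refl)).
  assert (0 <= sum_list l) by (apply IH; auto). unfold sum_list in *. lra.
Qed.

Lemma sum_xlnx_le_merge l : (forall x, In x l -> 0 <= x) -> sum_xlnx l <= xlnx (sum_list l).
Proof.
  induction l as [| a l IH]; simpl; intro Hl.
  - rewrite xlnx_nonpos; lra.
  - assert (Ha : 0 <= a) by auto.
    assert (Hsum : 0 <= sum_list l) by (apply sum_list_nonneg; auto).
    assert (sum_xlnx l <= xlnx (sum_list l)) by (apply IH; auto).
    pose proof (xlnx_superadd a (sum_list l) Ha Hsum).
    unfold sum_xlnx, sum_list in *. lra.
Qed.

Lemma sum_xlnx_le_small l : (forall x, In x l -> 0 <= x <= / 2) ->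
  sum_xlnx l <= - (ln 2 * sum_list l).
Proof.
  induction l as [| a l IH]; simpl; intro Hl; [lra |].
  pose proof (xlnx_le_half a (Hl a (or_introl eq_refl))).
  assert (sum_xlnx l <= - (ln 2 * sum_list l)) by (apply IH; auto).
  unfold sum_xlnx, sum_list in *. lra.
Qed.

Lemma entropy_ge_binary l lam :
  (forall x, In x l -> 0 <= x <= lam) -> sum_list l = 1 -> / 2 <= lam <= 1 ->
  sum_xlnx l <= xlnx lam + xlnx (1 - lam).
Proof.
  intros Hl Hsum Hlam.
  destruct (classic (exists x, In x l /\ / 2 < x)) as [[x [Hx Hbig]] | Hsmall].
  - (* one weight x > 1/2: merge the others into 1 - x, then spread towards lam *)
    destruct (in_split x l Hx) as [l1 [l2 ->]].
    assert (Hrest : sum_xlnx (l1 ++ l2) <= xlnx (1 - x)).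
    { replace (1 - x) with (sum_list (l1 ++ l2))
        by (rewrite sum_list_app in *; simpl in Hsum; unfold sum_list in *; lra).
      apply sum_xlnx_le_merge. intros y Hy. apply Hl.
      apply in_app_or in Hy. apply in_or_app. simpl. tauto. }
    assert (Hxl : x <= lam) by (apply Hl, in_or_app; simpl; tauto).
    pose proof (xlnx_spread x (1 - x) (lam - x) ltac:(lra) ltac:(lra) ltac:(lra) ltac:(lra)).
    replace (x + (lam - x)) with lam in * by ring.
    replace (1 - x - (lam - x)) with (1 - lam) in * by ring.
    rewrite sum_xlnx_app in *. simpl. unfold sum_xlnx in *. lra.
  - (* all weights are at most 1/2: the entropy is at least ln 2 *)
    assert (Hhalf : forall y, In y l -> 0 <= y <= / 2).
    { intros y Hy. split; [apply Hl; auto |].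
      apply Rnot_lt_le. intro Hlt. apply Hsmall. eauto. }
    pose proof (sum_xlnx_le_small l Hhalf).
    pose proof (xlnx_binary_ge lam ltac:(lra)).
    rewrite Hsum in *. lra.
Qed.

(* [mix a b] is the (unnormalised, natural-log) entropy of the weights a, b:
   (a + b) h(a / (a + b)).  It is jointly concave and homogeneous, hence
   superadditive. *)
Definition mix (a b : R) : R := xlnx (a + b) - xlnx a - xlnx b.

Lemma mix_0_l b : mix 0 b = 0.
Proof. unfold mix. rewrite (xlnx_nonpos 0), Rplus_0_l by lra. ring. Qed.

Lemma mix_0_r a : mix a 0 = 0.
Proof. unfold mix. rewrite (xlnx_nonpos 0), Rplus_0_r by lra. ring. Qed.

Lemma mix_tangent a b A B : 0 <= a -> 0 <= b -> 0 < A -> 0 < B ->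
  mix a b <= a * ln ((A + B) / A) + b * ln ((A + B) / B).
Proof.
  intros Ha Hb HA HB.
  assert (0 <= ln ((A + B) / A)) by (rewrite ln_div by lra; pose proof (ln_le A (A + B)); lra).
  assert (0 <= ln ((A + B) / B)) by (rewrite ln_div by lra; pose proof (ln_le B (A + B)); lra).
  destruct Ha as [Ha | <-]; [| rewrite mix_0_l; nra].
  destruct Hb as [Hb | <-]; [| rewrite mix_0_r; nra].
  unfold mix. rewrite !xlnx_pos by lra. rewrite !ln_div by lra.
  pose proof (ln_ge_1_minus_inv ((A + B) * a / (A * (a + b)))
                ltac:(apply Rdiv_lt_0_compat; nra)) as H1.
  pose proof (ln_ge_1_minus_inv ((A + B) * b / (B * (a + b)))
                ltac:(apply Rdiv_lt_0_compat; nra)) as H2.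
  rewrite !ln_div, !ln_mult in H1, H2 by nra.
  replace (/ ((A + B) * a / (A * (a + b)))) with (A * (a + b) / ((A + B) * a)) in H1 by (field; nra).
  replace (/ ((A + B) * b / (B * (a + b)))) with (B * (a + b) / ((A + B) * b)) in H2 by (field; nra).
  apply (Rmult_le_compat_l a) in H1; [| lra].
  apply (Rmult_le_compat_l b) in H2; [| lra].
  assert (a * (1 - A * (a + b) / ((A + B) * a)) + b * (1 - B * (a + b) / ((A + B) * b)) = 0)
    by (field; nra).
  nra.
Qed.

Lemma mix_superadd a1 b1 a2 b2 : 0 <= a1 -> 0 <= b1 -> 0 <= a2 -> 0 <= b2 ->
  mix a1 b1 + mix a2 b2 <= mix (a1 + a2) (b1 + b2).
Proof.
  intros Ha1 Hb1 Ha2 Hb2.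
  destruct (Req_dec (a1 + a2) 0) as [Ha | Ha].
  { replace a1 with 0 by lra. replace a2 with 0 by lra. rewrite Rplus_0_l, !mix_0_l. lra. }
  destruct (Req_dec (b1 + b2) 0) as [Hb | Hb].
  { replace b1 with 0 by lra. replace b2 with 0 by lra. rewrite Rplus_0_r, !mix_0_r. lra. }
  pose proof (mix_tangent a1 b1 (a1 + a2) (b1 + b2) Ha1 Hb1 ltac:(lra) ltac:(lra)).
  pose proof (mix_tangent a2 b2 (a1 + a2) (b1 + b2) Ha2 Hb2 ltac:(lra) ltac:(lra)).
  assert (mix (a1 + a2) (b1 + b2) = (a1 + a2) * ln ((a1 + a2 + (b1 + b2)) / (a1 + a2))
                                   + (b1 + b2) * ln ((a1 + a2 + (b1 + b2)) / (b1 + b2))).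
  { unfold mix. rewrite !xlnx_pos, !ln_div by lra. ring. }
  lra.
Qed.

(* Unnormalised von Neumann entropy (nats) of a positive qubit operator with
   trace t and Bloch-vector length r, i.e. with eigenvalues (t +- r) / 2. *)
Definition qubit_entropy (t r : R) : R := mix ((t + r) / 2) ((t - r) / 2).

Lemma qubit_entropy_antitone t r1 r2 : 0 <= r1 -> r1 <= r2 -> r2 <= t ->
  qubit_entropy t r2 <= qubit_entropy t r1.
Proof.
  intros H1 H12 H2. unfold qubit_entropy, mix.
  pose proof (xlnx_spread ((t + r1) / 2) ((t - r1) / 2) ((r2 - r1) / 2)
                ltac:(lra) ltac:(lra) ltac:(lra) ltac:(lra)).
  replace ((t + r1) / 2 + (r2 - r1) / 2) with ((t + r2) / 2) in * by field.
  replace ((t - r1) / 2 - (r2 - r1) / 2) with ((t - r2) / 2) in * by field.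
  replace ((t + r2) / 2 + (t - r2) / 2) with t by field.
  replace ((t + r1) / 2 + (t - r1) / 2) with t by field.
  lra.
Qed.

Lemma qubit_entropy_superadd t1 r1 t2 r2 r :
  0 <= r1 <= t1 -> 0 <= r2 <= t2 -> 0 <= r -> r <= r1 + r2 ->
  qubit_entropy t1 r1 + qubit_entropy t2 r2 <= qubit_entropy (t1 + t2) r.
Proof.
  intros H1 H2 Hr Hr12.
  pose proof (mix_superadd ((t1 + r1) / 2) ((t1 - r1) / 2) ((t2 + r2) / 2) ((t2 - r2) / 2)
                ltac:(lra) ltac:(lra) ltac:(lra) ltac:(lra)) as Hsup.
  replace ((t1 + r1) / 2 + (t2 + r2) / 2) with ((t1 + t2 + (r1 + r2)) / 2) in Hsup by field.
  replace ((t1 - r1) / 2 + (t2 - r2) / 2) with ((t1 + t2 - (r1 + r2)) / 2) in Hsup by field.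
  pose proof (qubit_entropy_antitone (t1 + t2) r (r1 + r2) Hr Hr12 ltac:(lra)).
  unfold qubit_entropy in *. lra.
Qed.

(* A 2x2 complex matrix.  For a Hermitian M = [[a, c], [c*, d]] the
   eigenvalues are (tr M +- sqrt disc) / 2 with disc = (a - d)^2 + 4 |c|^2,
   and sqrt disc is the length of the Bloch vector of M. *)
Definition mat2 := bool -> bool -> Defs.C.

Definition bloch_disc (a d cr ci : R) : R := (a - d) ^ 2 + 4 * (cr ^ 2 + ci ^ 2).

Definition mtrace (M : mat2) : R := fst (M false false) + fst (M true true).

Definition bloch (M : mat2) : R :=
  sqrt (bloch_disc (fst (M false false)) (fst (M true true)) (fst (M false true)) (snd (M false true))).

Lemma bloch_disc_nonneg a d cr ci : 0 <= bloch_disc a d cr ci.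
Proof.
  unfold bloch_disc. pose proof (pow2_ge_0 (a - d)). pose proof (pow2_ge_0 cr).
  pose proof (pow2_ge_0 ci). lra.
Qed.

Lemma bloch_nonneg M : 0 <= bloch M.
Proof. apply sqrt_pos. Qed.

Lemma sqrt_le_of_sq x y : 0 <= y -> x <= y * y -> sqrt x <= y.
Proof. intros Hy Hxy. rewrite <- (sqrt_square y) by exact Hy. apply sqrt_le_1_alt, Hxy. Qed.

Lemma le_sqrt_of_sq z x : z * z <= x -> z <= sqrt x.
Proof.
  intro Hzx. apply Rle_trans with (Rabs z); [apply Rle_abs |].
  rewrite <- sqrt_Rsqr_abs. apply sqrt_le_1_alt, Hzx.
Qed.

(* sqrt bloch_disc is a Euclidean norm of (a - d, 2 cr, 2 ci): triangle inequality. *)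
Lemma bloch_disc_triangle a1 d1 cr1 ci1 a2 d2 cr2 ci2 :
  sqrt (bloch_disc (a1 + a2) (d1 + d2) (cr1 + cr2) (ci1 + ci2))
  <= sqrt (bloch_disc a1 d1 cr1 ci1) + sqrt (bloch_disc a2 d2 cr2 ci2).
Proof.
  set (D1 := bloch_disc a1 d1 cr1 ci1). set (D2 := bloch_disc a2 d2 cr2 ci2).
  assert (HD1 : 0 <= D1) by apply bloch_disc_nonneg.
  assert (HD2 : 0 <= D2) by apply bloch_disc_nonneg.
  pose proof (sqrt_pos D1). pose proof (sqrt_pos D2).
  set (dot := (a1 - d1) * (a2 - d2) + 4 * (cr1 * cr2 + ci1 * ci2)).
  assert (Hcs : dot <= sqrt D1 * sqrt D2).
  { rewrite <- sqrt_mult by assumption. apply le_sqrt_of_sq. unfold dot, D1, D2, bloch_disc.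
    set (u1 := a1 - d1). set (u2 := a2 - d2).
    assert (Lagrange : (u1 ^ 2 + 4 * (cr1 ^ 2 + ci1 ^ 2)) * (u2 ^ 2 + 4 * (cr2 ^ 2 + ci2 ^ 2))
      - (u1 * u2 + 4 * (cr1 * cr2 + ci1 * ci2)) * (u1 * u2 + 4 * (cr1 * cr2 + ci1 * ci2))
      = 4 * (u1 * cr2 - u2 * cr1) ^ 2 + 4 * (u1 * ci2 - u2 * ci1) ^ 2
        + 16 * (cr1 * ci2 - cr2 * ci1) ^ 2) by ring.
    pose proof (pow2_ge_0 (u1 * cr2 - u2 * cr1)). pose proof (pow2_ge_0 (u1 * ci2 - u2 * ci1)).
    pose proof (pow2_ge_0 (cr1 * ci2 - cr2 * ci1)). lra. }
  assert (Hsum : bloch_disc (a1 + a2) (d1 + d2) (cr1 + cr2) (ci1 + ci2) = D1 + D2 + 2 * dot)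
    by (unfold D1, D2, dot, bloch_disc; ring).
  rewrite Hsum. apply sqrt_le_of_sq; [lra |].
  pose proof (sqrt_sqrt _ HD1). pose proof (sqrt_sqrt _ HD2). nra.
Qed.

Section MatrixSum.
Variables M N1 N2 : mat2.
Hypothesis HM : forall j j', M j j' = Cadd (N1 j j') (N2 j j').

Lemma mtrace_add : mtrace M = mtrace N1 + mtrace N2.
Proof. unfold mtrace. rewrite !HM. simpl. ring. Qed.

Lemma bloch_add : bloch M <= bloch N1 + bloch N2.
Proof. unfold bloch. rewrite !HM. apply bloch_disc_triangle. Qed.

End MatrixSum.

(* The quadratic form of a Hermitian matrix on a unit vector g is at most its
   largest eigenvalue; here m = |g0|^2, n = |g1|^2 and w = conj g0 * g1. *)
Lemma qform_le_max_eig a d cr ci m n wr wi : m + n = 1 -> wr * wr + wi * wi = m * n ->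
  a * m + d * n + 2 * (wr * cr - wi * ci) <= (a + d + sqrt (bloch_disc a d cr ci)) / 2.
Proof.
  intros Hmn Hw.
  set (z := (a - d) * (m - n) + 4 * (wr * cr - wi * ci)).
  assert (Hz : 2 * (a * m + d * n + 2 * (wr * cr - wi * ci)) - (a + d) = z).
  { unfold z. replace (a + d) with ((a + d) * (m + n)) by (rewrite Hmn; ring). ring. }
  assert (Hunit : (m - n) ^ 2 + 4 * (wr * wr + wi * wi) = 1).
  { rewrite Hw. replace 1 with ((m + n) ^ 2) by (rewrite Hmn; ring). ring. }
  assert (z <= sqrt (bloch_disc a d cr ci)).
  { apply le_sqrt_of_sq.
    assert (Lagrange : bloch_disc a d cr ci * ((m - n) ^ 2 + 4 * (wr * wr + wi * wi)) - z * z =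
      4 * ((a - d) * wr - (m - n) * cr) ^ 2 + 4 * ((a - d) * wi + (m - n) * ci) ^ 2
      + 16 * (cr * wi + ci * wr) ^ 2) by (unfold bloch_disc, z; ring).
    rewrite Hunit in Lagrange.
    pose proof (pow2_ge_0 ((a - d) * wr - (m - n) * cr)).
    pose proof (pow2_ge_0 ((a - d) * wi + (m - n) * ci)).
    pose proof (pow2_ge_0 (cr * wi + ci * wr)). lra. }
  lra.
Qed.

Lemma rho_disc f :
  rho_tr f * rho_tr f - 4 * rho_det f
  = bloch_disc (fst (rho f false false)) (fst (rho f true true))
               (fst (rho f false true)) (snd (rho f false true)).
Proof. unfold rho_tr, rho_det, bloch_disc, rho, Csum2, Cmul, Cadd, Cconj, Cscale. simpl. ring. Qed.

Lemma rho_det_nonneg f : 0 <= rho_det f.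
Proof.
  unfold rho_det, rho, Csum2, Cmul, Cadd, Cconj, Cscale. simpl.
  destruct (f false false) as [a b], (f false true) as [c d],
           (f true false) as [e g], (f true true) as [h k]. simpl.
  (* det rho = |det f|^2 *)
  match goal with |- 0 <= ?E =>
    replace E with ((a * h - b * k - (c * e - d * g)) ^ 2 + (a * k + b * h - (c * g + d * e)) ^ 2)
      by ring end.
  pose proof (pow2_ge_0 (a * h - b * k - (c * e - d * g))).
  pose proof (pow2_ge_0 (a * k + b * h - (c * g + d * e))). lra.
Qed.

Lemma rho_diag_nonneg f j : 0 <= fst (rho f j j).
Proof. unfold rho, Csum2, Cmul, Cadd, Cconj; simpl. nra. Qed.

Lemma bloch_rho_le_trace f : bloch (rho f) <= mtrace (rho f).
Proof.
  pose proof (rho_diag_nonneg f false). pose proof (rho_diag_nonneg f true).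
  pose proof (rho_det_nonneg f). pose proof (rho_disc f).
  unfold rho_tr in *. unfold bloch, mtrace. apply sqrt_le_of_sq; lra.
Qed.

Lemma rho_scale f r j j' : rho (fun j k => Cscale r (f j k)) j j' = Cscale (r * r) (rho f j j').
Proof. unfold rho, Csum2, Cmul, Cadd, Cconj, Cscale; simpl. f_equal; ring. Qed.

Lemma rho_eig_normalised f p : 0 < p -> mtrace (rho f) = p -> forall s,
  rho_eig (fun j k => Cscale (/ sqrt p) (f j k)) s
  = ((p + (if s then 1 else -1) * bloch (rho f)) / 2) / p.
Proof.
  intros Hp Htr s.
  set (g := fun j k => Cscale (/ sqrt p) (f j k)).
  assert (Hinv : / sqrt p * / sqrt p = / p) by (rewrite <- Rinv_mult, sqrt_sqrt; lra).
  assert (Htr_g : rho_tr g = rho_tr f / p).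
  { unfold g, rho_tr. rewrite !rho_scale. unfold Cscale. simpl. rewrite Hinv. field. lra. }
  assert (Hdet_g : rho_det g = rho_det f / (p * p)).
  { unfold g, rho_det. rewrite !rho_scale. unfold Cscale, Cmul, Cadd. simpl. rewrite Hinv.
    field. lra. }
  unfold rho_eig. rewrite Htr_g, Hdet_g.
  replace (rho_tr f / p * (rho_tr f / p) - 4 * (rho_det f / (p * p)))
    with ((rho_tr f * rho_tr f - 4 * rho_det f) * (/ p * / p)) by (field; lra).
  assert (0 < / p) by (apply Rinv_0_lt_compat; lra).
  rewrite rho_disc, sqrt_mult, sqrt_square by (apply bloch_disc_nonneg || nra).
  fold (bloch (rho f)). change (rho_tr f) with (mtrace (rho f)). rewrite Htr. field. lra.
Qed.

Lemma xlnx_div p l : 0 < p -> 0 <= l -> p * xlnx (l / p) = xlnx l - l * ln p.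
Proof.
  intros Hp [Hl | <-].
  - rewrite !xlnx_pos by (try apply Rdiv_lt_0_compat; lra). rewrite ln_div by lra. field. lra.
  - unfold Rdiv. rewrite Rmult_0_l, !xlnx_nonpos by lra. ring.
Qed.

Lemma ent_entropy_normalised f p : 0 < p -> mtrace (rho f) = p ->
  p * ent_entropy (fun j k => Cscale (/ sqrt p) (f j k)) = qubit_entropy p (bloch (rho f)) / ln 2.
Proof.
  intros Hp Htr. pose proof ln2_pos.
  pose proof (bloch_rho_le_trace f). pose proof (bloch_nonneg (rho f)).
  unfold ent_entropy, Rsum2. rewrite !(rho_eig_normalised f p Hp Htr), !xlog2x_xlnx.
  replace (p * - (xlnx ((p + -1 * bloch (rho f)) / 2 / p) / ln 2
                  + xlnx ((p + 1 * bloch (rho f)) / 2 / p) / ln 2))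
    with (- (p * xlnx ((p + -1 * bloch (rho f)) / 2 / p)
             + p * xlnx ((p + 1 * bloch (rho f)) / 2 / p)) / ln 2) by (field; lra).
  rewrite !xlnx_div by lra.
  unfold qubit_entropy, mix. replace ((p + bloch (rho f)) / 2 + (p - bloch (rho f)) / 2) with p by field.
  rewrite (xlnx_pos p Hp).
  replace ((p + -1 * bloch (rho f)) / 2) with ((p - bloch (rho f)) / 2) by lra.
  replace ((p + 1 * bloch (rho f)) / 2) with ((p + bloch (rho f)) / 2) by lra.
  field. lra.
Qed.

Lemma post_prob_trace psi X y : post_prob psi X y = mtrace (rho (post_state psi X y)).
Proof. unfold post_prob, mtrace, rho, Rsum2, Csum2, Cnorm2, Cmul, Cadd, Cconj. simpl. ring. Qed.

Lemma weighted_term_eq psi X y :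
  weighted_term psi X y
  = qubit_entropy (post_prob psi X y) (bloch (rho (post_state psi X y))) / ln 2.
Proof.
  unfold weighted_term. rewrite post_prob_trace.
  set (f := post_state psi X y).
  destruct (Req_EM_T (mtrace (rho f)) 0) as [H0 | Hne].
  - pose proof (bloch_rho_le_trace f). pose proof (bloch_nonneg (rho f)).
    rewrite H0. replace (bloch (rho f)) with 0 by lra.
    unfold qubit_entropy. replace ((0 + 0) / 2) with 0 by field. replace ((0 - 0) / 2) with 0 by field.
    rewrite mix_0_l. unfold Rdiv. ring.
  - pose proof (rho_diag_nonneg f false). pose proof (rho_diag_nonneg f true).
    apply ent_entropy_normalised; [unfold mtrace in *; lra | reflexivity].
Qed.

(* Completeness of an orthonormal basis of C^2: a 2x2 matrix with orthonormal
   rows x0 = (p0 + i q0, p1 + i q1), x1 = (r0 + i s0, r1 + i s1) also has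
   orthonormal columns. *)
Section UnitaryColumns.
Variables p0 q0 p1 q1 r0 s0 r1 s1 : R.
Hypothesis norm_x0 : p0 * p0 + q0 * q0 + (p1 * p1 + q1 * q1) = 1.
Hypothesis norm_x1 : r0 * r0 + s0 * s0 + (r1 * r1 + s1 * s1) = 1.
Hypothesis orth_re : p0 * r0 + q0 * s0 + (p1 * r1 + q1 * s1) = 0.
Hypothesis orth_im : p0 * s0 - q0 * r0 + (p1 * s1 - q1 * r1) = 0.

Lemma unitary_column_norm : p0 * p0 + q0 * q0 + (r0 * r0 + s0 * s0) = 1.
Proof.
  (* |x00|^2 |x10|^2 = |x01|^2 |x11|^2, since the two products cancel in <x0, x1> *)
  assert (Hprod : (p0 * p0 + q0 * q0) * (r0 * r0 + s0 * s0)
                  = (p1 * p1 + q1 * q1) * (r1 * r1 + s1 * s1)).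
  { replace ((p0 * p0 + q0 * q0) * (r0 * r0 + s0 * s0))
      with ((p0 * r0 + q0 * s0) ^ 2 + (p0 * s0 - q0 * r0) ^ 2) by ring.
    replace (p0 * r0 + q0 * s0) with (- (p1 * r1 + q1 * s1)) by lra.
    replace (p0 * s0 - q0 * r0) with (- (p1 * s1 - q1 * r1)) by lra. ring. }
  replace (p1 * p1 + q1 * q1) with (1 - (p0 * p0 + q0 * q0)) in Hprod by lra.
  replace (r1 * r1 + s1 * s1) with (1 - (r0 * r0 + s0 * s0)) in Hprod by lra.
  nra.
Qed.

(* Writing g = conj(x00) x01 + conj(x10) x11 for the inner product of the two
   columns, the entries x00 and x10 both annihilate g. *)
Lemma unitary_row0_annihilates :
  p0 * (p0 * p1 + q0 * q1 + (r0 * r1 + s0 * s1)) - q0 * (p0 * q1 - q0 * p1 + (r0 * s1 - s0 * r1)) = 0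
  /\ p0 * (p0 * q1 - q0 * p1 + (r0 * s1 - s0 * r1)) + q0 * (p0 * p1 + q0 * q1 + (r0 * r1 + s0 * s1)) = 0.
Proof.
  pose proof unitary_column_norm.
  assert (Hdiag : p0 * p0 + q0 * q0 - (r1 * r1 + s1 * s1) = 0) by lra.
  split.
  - transitivity ((p0 * p0 + q0 * q0 - (r1 * r1 + s1 * s1)) * p1
                  + (p0 * r0 + q0 * s0 + (p1 * r1 + q1 * s1)) * r1
                  + (p0 * s0 - q0 * r0 + (p1 * s1 - q1 * r1)) * s1); [ring |].
    rewrite Hdiag, orth_re, orth_im. ring.
  - transitivity ((p0 * p0 + q0 * q0 - (r1 * r1 + s1 * s1)) * q1
                  + (p0 * r0 + q0 * s0 + (p1 * r1 + q1 * s1)) * s1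
                  - (p0 * s0 - q0 * r0 + (p1 * s1 - q1 * r1)) * r1); [ring |].
    rewrite Hdiag, orth_re, orth_im. ring.
Qed.

Lemma unitary_row1_annihilates :
  r0 * (p0 * p1 + q0 * q1 + (r0 * r1 + s0 * s1)) - s0 * (p0 * q1 - q0 * p1 + (r0 * s1 - s0 * r1)) = 0
  /\ r0 * (p0 * q1 - q0 * p1 + (r0 * s1 - s0 * r1)) + s0 * (p0 * p1 + q0 * q1 + (r0 * r1 + s0 * s1)) = 0.
Proof.
  pose proof unitary_column_norm.
  assert (Hdiag : r0 * r0 + s0 * s0 - (p1 * p1 + q1 * q1) = 0) by lra.
  split.
  - transitivity ((p0 * r0 + q0 * s0 + (p1 * r1 + q1 * s1)) * p1
                  - (p0 * s0 - q0 * r0 + (p1 * s1 - q1 * r1)) * q1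
                  + (r0 * r0 + s0 * s0 - (p1 * p1 + q1 * q1)) * r1); [ring |].
    rewrite Hdiag, orth_re, orth_im. ring.
  - transitivity ((p0 * r0 + q0 * s0 + (p1 * r1 + q1 * s1)) * q1
                  + (p0 * s0 - q0 * r0 + (p1 * s1 - q1 * r1)) * p1
                  + (r0 * r0 + s0 * s0 - (p1 * p1 + q1 * q1)) * s1); [ring |].
    rewrite Hdiag, orth_re, orth_im. ring.
Qed.

(* Since |x00|^2 + |x10|^2 = 1, it follows that |g|^2 = 0. *)
Lemma unitary_column_orth :
  p0 * p1 + q0 * q1 + (r0 * r1 + s0 * s1) = 0 /\ p0 * q1 - q0 * p1 + (r0 * s1 - s0 * r1) = 0.
Proof.
  pose proof unitary_column_norm as Hcol.
  destruct unitary_row0_annihilates as [H1 H2], unitary_row1_annihilates as [H3 H4].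
  set (gr := p0 * p1 + q0 * q1 + (r0 * r1 + s0 * s1)) in *.
  set (gi := p0 * q1 - q0 * p1 + (r0 * s1 - s0 * r1)) in *.
  assert (Hg : gr * gr + gi * gi = 0).
  { transitivity ((p0 * p0 + q0 * q0 + (r0 * r0 + s0 * s0)) * (gr * gr + gi * gi));
      [rewrite Hcol; ring |].
    transitivity ((p0 * gr - q0 * gi) ^ 2 + (p0 * gi + q0 * gr) ^ 2
                  + (r0 * gr - s0 * gi) ^ 2 + (r0 * gi + s0 * gr) ^ 2); [ring |].
    rewrite H1, H2, H3, H4. ring. }
  split; nra.
Qed.

End UnitaryColumns.

Lemma onb_complete (x : bool -> qubit) : orthonormal_basis x -> forall a a',
  Csum2 (fun i => Cmul (Cconj (x i a)) (x i a')) = if Bool.eqb a a' then (1, 0) else C0.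
Proof.
  intros Hx a a'.
  pose proof (Hx false false) as H00. pose proof (Hx true true) as H11.
  pose proof (Hx false true) as H01. clear Hx.
  destruct a, a'; unfold inner, Csum2, Cmul, Cadd, Cconj, C0 in *; simpl in *;
  destruct (x false false) as [p0 q0], (x false true) as [p1 q1],
           (x true false) as [r0 s0], (x true true) as [r1 s1]; simpl in *;
  injection H00 as E1 _; injection H11 as E2 _; injection H01 as E3 E4;
  pose proof (unitary_column_norm p0 q0 p1 q1 r0 s0 r1 s1 ltac:(lra) ltac:(lra) ltac:(lra) ltac:(lra));
  destruct (unitary_column_orth p0 q0 p1 q1 r0 s0 r1 s1 ltac:(lra) ltac:(lra) ltac:(lra) ltac:(lra));
  f_equal; lra.
Qed.

Lemma onb_unit (x : bool -> qubit) i : orthonormal_basis x -> Rsum2 (fun k => Cnorm2 (x i k)) = 1.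
Proof.
  intro Hx. specialize (Hx i i). rewrite Bool.eqb_reflx in Hx.
  unfold inner, Csum2, Cmul, Cadd, Cconj in Hx. unfold Rsum2, Cnorm2.
  destruct (x i false) as [p q], (x i true) as [r s]. simpl in *.
  injection Hx as E _. lra.
Qed.

Lemma parseval (x : bool -> qubit) : orthonormal_basis x -> forall w : qubit,
  Rsum2 (fun i => Cnorm2 (inner (x i) w)) = Rsum2 (fun k => Cnorm2 (w k)).
Proof.
  intros Hx w.
  (* expand |<x_i, w>|^2 so that only the completeness sums of x appear *)
  set (K := fun k k' => Csum2 (fun i => Cmul (Cconj (x i k)) (x i k'))).
  transitivity (fst (Csum2 (fun k => Csum2 (fun k' => Cmul (K k k') (Cmul (w k) (Cconj (w k'))))))).
  - unfold K, Rsum2, inner, Csum2, Cnorm2, Cmul, Cadd, Cconj. simpl. ring.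
  - unfold Csum2. cbv beta. unfold K. rewrite !(onb_complete x Hx). simpl.
    unfold Rsum2, Cnorm2, Cmul, Cadd, Cconj, C0. simpl. ring.
Qed.

Definition rhoB (phi : state3) : mat2 :=
  fun j j' => Csum2 (fun a => Csum2 (fun c => Cmul (phi a j c) (Cconj (phi a j' c)))).

Lemma rhoB_trace phi : is_unit3 phi -> mtrace (rhoB phi) = 1.
Proof.
  unfold is_unit3, mtrace, rhoB, Rsum2, Csum2, Cnorm2, Cmul, Cadd, Cconj. simpl.
  intro Hu. rewrite <- Hu. ring.
Qed.

Lemma rhoB_split (x : bool -> qubit) (phi : state3) : orthonormal_basis x -> forall j j',
  rhoB phi j j' = Cadd (rho (post_state phi PA (x false)) j j') (rho (post_state phi PA (x true)) j j').
Proof.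
  intros Hx j j'.
  set (K := fun a a' => Csum2 (fun i => Cmul (Cconj (x i a)) (x i a'))).
  transitivity (Csum2 (fun k => Csum2 (fun a => Csum2 (fun a' =>
                  Cmul (K a a') (Cmul (phi a j k) (Cconj (phi a' j' k))))))).
  - unfold Csum2. cbv beta. unfold K. rewrite !(onb_complete x Hx). simpl.
    unfold rhoB, Csum2, Cmul, Cadd, Cconj, C0. simpl. f_equal; ring.
  - unfold K, rho, post_state, Csum2, Cmul, Cadd, Cconj. simpl. f_equal; ring.
Qed.

Definition std_basis : bool -> qubit := fun i k => if Bool.eqb i k then (1, 0) else C0.

Lemma std_basis_orthonormal : orthonormal_basis std_basis.
Proof.
  intros [] []; unfold inner, std_basis, Csum2, Cmul, Cadd, Cconj, C0; simpl; f_equal; ring.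
Qed.

(* rhoB is a sum of two positive matrices, hence its Bloch length is at most its trace. *)
Lemma bloch_rhoB_le_1 phi : is_unit3 phi -> bloch (rhoB phi) <= 1.
Proof.
  intro Hu. pose proof (rhoB_split std_basis phi std_basis_orthonormal) as Hsplit.
  rewrite <- (rhoB_trace phi Hu), (mtrace_add _ _ _ Hsplit).
  pose proof (bloch_add _ _ _ Hsplit).
  pose proof (bloch_rho_le_trace (post_state phi PA (std_basis false))).
  pose proof (bloch_rho_le_trace (post_state phi PA (std_basis true))).
  lra.
Qed.

Lemma locc_average_le phi x : orthonormal_basis x -> is_unit3 phi ->
  locc_average phi PA x <= qubit_entropy 1 (bloch (rhoB phi)) / ln 2.
Proof.
  intros Hx Hu. pose proof ln2_pos.
  unfold locc_average, Rsum2. rewrite !weighted_term_eq, !post_prob_trace.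
  set (f0 := post_state phi PA (x false)). set (f1 := post_state phi PA (x true)).
  pose proof (rhoB_split x phi Hx) as Hsplit. fold f0 f1 in Hsplit.
  pose proof (rhoB_trace phi Hu) as Htr. rewrite (mtrace_add _ _ _ Hsplit) in Htr.
  pose proof (bloch_add _ _ _ Hsplit).
  pose proof (bloch_rho_le_trace f0). pose proof (bloch_rho_le_trace f1).
  pose proof (bloch_nonneg (rho f0)). pose proof (bloch_nonneg (rho f1)).
  pose proof (bloch_nonneg (rhoB phi)).
  pose proof (qubit_entropy_superadd (mtrace (rho f0)) (bloch (rho f0))
                (mtrace (rho f1)) (bloch (rho f1)) (bloch (rhoB phi))
                ltac:(lra) ltac:(lra) ltac:(lra) ltac:(lra)) as Hsup.
  rewrite Htr in Hsup.
  unfold Rdiv. rewrite <- Rmult_plus_distr_r.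
  apply Rmult_le_compat_r; [left; apply Rinv_0_lt_compat |]; lra.
Qed.

(* Cauchy-Schwarz inequality in C^4, via Lagrange's identity. *)
Lemma cauchy_schwarz4 (u1 u2 u3 u4 v1 v2 v3 v4 : Defs.C) :
  Cnorm2 (Cadd (Cadd (Cmul u1 v1) (Cmul u2 v2)) (Cadd (Cmul u3 v3) (Cmul u4 v4))) <=
  (Cnorm2 u1 + Cnorm2 u2 + Cnorm2 u3 + Cnorm2 u4) * (Cnorm2 v1 + Cnorm2 v2 + Cnorm2 v3 + Cnorm2 v4).
Proof.
  destruct u1 as [a1 b1], u2 as [a2 b2], u3 as [a3 b3], u4 as [a4 b4].
  destruct v1 as [c1 d1], v2 as [c2 d2], v3 as [c3 d3], v4 as [c4 d4].
  unfold Cnorm2, Cadd, Cmul. simpl.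
  (* T = |u_k v_l - u_l v_k|^2 *)
  set (T := fun a b c d a' b' c' d' =>
     (a * c' + b * d' - (a' * c + b' * d)) ^ 2 + (b * c' - a * d' - (b' * c - a' * d)) ^ 2).
  assert (HT : forall a b c d a' b' c' d', 0 <= T a b c d a' b' c' d').
  { intros. unfold T.
    pose proof (pow2_ge_0 (a * c' + b * d' - (a' * c + b' * d))).
    pose proof (pow2_ge_0 (b * c' - a * d' - (b' * c - a' * d))). lra. }
  match goal with |- ?l <= ?r =>
    assert (r - l = T a1 b1 c1 d1 a2 b2 c2 d2 + T a1 b1 c1 d1 a3 b3 c3 d3
                  + T a1 b1 c1 d1 a4 b4 c4 d4 + T a2 b2 c2 d2 a3 b3 c3 d3
                  + T a2 b2 c2 d2 a4 b4 c4 d4 + T a3 b3 c3 d3 a4 b4 c4 d4) by (unfold T; ring) end.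
  pose proof (HT a1 b1 c1 d1 a2 b2 c2 d2). pose proof (HT a1 b1 c1 d1 a3 b3 c3 d3).
  pose proof (HT a1 b1 c1 d1 a4 b4 c4 d4). pose proof (HT a2 b2 c2 d2 a3 b3 c3 d3).
  pose proof (HT a2 b2 c2 d2 a4 b4 c4 d4). pose proof (HT a3 b3 c3 d3 a4 b4 c4 d4).
  lra.
Qed.

Lemma amp3_via_post_state phi f g h :
  amp3 phi f g h =
  Cadd (Cadd (Cmul (Cmul (Cconj (f false)) (Cconj (h false))) (post_state phi PB g false false))
             (Cmul (Cmul (Cconj (f false)) (Cconj (h true))) (post_state phi PB g false true)))
       (Cadd (Cmul (Cmul (Cconj (f true)) (Cconj (h false))) (post_state phi PB g true false))
             (Cmul (Cmul (Cconj (f true)) (Cconj (h true))) (post_state phi PB g true true))).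
Proof. unfold amp3, post_state, Csum2, Cmul, Cadd, Cconj. simpl. f_equal; ring. Qed.

Lemma Cnorm2_mul_conj u v : Cnorm2 (Cmul (Cconj u) (Cconj v)) = Cnorm2 u * Cnorm2 v.
Proof. destruct u, v. unfold Cnorm2, Cmul, Cconj; simpl. ring. Qed.

Lemma amp3_le_post_prob phi f g h :
  Rsum2 (fun k => Cnorm2 (f k)) = 1 -> Rsum2 (fun k => Cnorm2 (h k)) = 1 ->
  Cnorm2 (amp3 phi f g h) <= post_prob phi PB g.
Proof.
  intros Hf Hh. rewrite amp3_via_post_state. eapply Rle_trans; [apply cauchy_schwarz4 |].
  rewrite !Cnorm2_mul_conj. unfold Rsum2 in Hf, Hh. unfold post_prob, Rsum2.
  replace (Cnorm2 (f false) * Cnorm2 (h false) + Cnorm2 (f false) * Cnorm2 (h true)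
           + Cnorm2 (f true) * Cnorm2 (h false) + Cnorm2 (f true) * Cnorm2 (h true))
    with ((Cnorm2 (f false) + Cnorm2 (f true)) * (Cnorm2 (h false) + Cnorm2 (h true))) by ring.
  rewrite Hf, Hh. lra.
Qed.

Lemma post_prob_B_qform phi g :
  post_prob phi PB g =
  fst (rhoB phi false false) * Cnorm2 (g false) + fst (rhoB phi true true) * Cnorm2 (g true)
  + 2 * (fst (Cmul (Cconj (g false)) (g true)) * fst (rhoB phi false true)
         - snd (Cmul (Cconj (g false)) (g true)) * snd (rhoB phi false true)).
Proof. unfold post_prob, post_state, rhoB, Rsum2, Csum2, Cnorm2, Cmul, Cadd, Cconj. simpl. ring. Qed.

Lemma amp3_le_max_eig phi f g h : is_unit3 phi ->
  Rsum2 (fun k => Cnorm2 (f k)) = 1 -> Rsum2 (fun k => Cnorm2 (g k)) = 1 ->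
  Rsum2 (fun k => Cnorm2 (h k)) = 1 ->
  Cnorm2 (amp3 phi f g h) <= (1 + bloch (rhoB phi)) / 2.
Proof.
  intros Hu Hf Hg Hh. eapply Rle_trans; [apply amp3_le_post_prob; assumption |].
  rewrite post_prob_B_qform, <- (rhoB_trace phi Hu). unfold mtrace, bloch.
  apply qform_le_max_eig; [exact Hg |].
  unfold Cnorm2, Cmul, Cconj. destruct (g false), (g true). simpl. ring.
Qed.

Lemma amp3_inner phi f g h :
  amp3 phi f g h = inner h (fun c => inner g (fun b => inner f (fun a => phi a b c))).
Proof. unfold amp3, inner, Csum2, Cmul, Cadd, Cconj. simpl. f_equal; ring. Qed.

(* For an adaptive scheme measuring the parties in their natural order, the
   outcome probabilities sum to the squared norm of the state: apply Parseval
   to the last, then the middle, then the first measured qubit. *)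
Lemma outcome_probs_total (phi : state3) (b1 : bool -> qubit) (b2 : bool -> bool -> qubit)
  (b3 : bool -> bool -> bool -> qubit) :
  orthonormal_basis b1 -> (forall i1, orthonormal_basis (b2 i1)) ->
  (forall i1 i2, orthonormal_basis (b3 i1 i2)) ->
  Rsum2 (fun i1 => Rsum2 (fun i2 => Rsum2 (fun i3 =>
    Cnorm2 (amp3 phi (b1 i1) (b2 i1 i2) (b3 i1 i2 i3)))))
  = Rsum2 (fun a => Rsum2 (fun b => Rsum2 (fun c => Cnorm2 (phi a b c)))).
Proof.
  intros H1 H2 H3.
  set (after1 := fun i1 b c => inner (b1 i1) (fun a => phi a b c)).
  set (after2 := fun i1 i2 c => inner (b2 i1 i2) (fun b => after1 i1 b c)).
  assert (S3 : forall i1 i2, Rsum2 (fun i3 => Cnorm2 (amp3 phi (b1 i1) (b2 i1 i2) (b3 i1 i2 i3)))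
                            = Rsum2 (fun c => Cnorm2 (after2 i1 i2 c))).
  { intros i1 i2. rewrite <- (parseval _ (H3 i1 i2) (after2 i1 i2)).
    unfold Rsum2. rewrite !amp3_inner. reflexivity. }
  assert (S2 : forall i1 c, Rsum2 (fun i2 => Cnorm2 (after2 i1 i2 c))
                           = Rsum2 (fun b => Cnorm2 (after1 i1 b c)))
    by (intros i1 c; apply (parseval _ (H2 i1))).
  assert (S1 : forall b c, Rsum2 (fun i1 => Cnorm2 (after1 i1 b c))
                          = Rsum2 (fun a => Cnorm2 (phi a b c)))
    by (intros b c; apply (parseval _ H1)).
  pose proof (S3 false false). pose proof (S3 false true).
  pose proof (S3 true false). pose proof (S3 true true).
  pose proof (S2 false false). pose proof (S2 false true).
  pose proof (S2 true false). pose proof (S2 true true).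
  pose proof (S1 false false). pose proof (S1 false true).
  pose proof (S1 true false). pose proof (S1 true true).
  unfold Rsum2 in *. lra.
Qed.

Definition relabel (o1 o2 o3 : party) (psi : state3) : state3 :=
  fun i j k =>
    let slot X := if party_eqb X o1 then i else if party_eqb X o2 then j else k in
    psi (slot PA) (slot PB) (slot PC).

Section Relabel.
Variables o1 o2 o3 : party.
Hypotheses (H12 : o1 <> o2) (H13 : o1 <> o3) (H23 : o2 <> o3).

Lemma amp3_relabel psi (f : party -> qubit) :
  amp3 psi (f PA) (f PB) (f PC) = amp3 (relabel o1 o2 o3 psi) (f o1) (f o2) (f o3).
Proof.
  destruct o1, o2, o3; try congruence;
  unfold amp3, relabel, Csum2, Cmul, Cadd, Cconj; simpl; f_equal; ring.
Qed.

Lemma is_unit3_relabel psi : is_unit3 psi -> is_unit3 (relabel o1 o2 o3 psi).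
Proof.
  unfold is_unit3. intro Hu. rewrite <- Hu.
  destruct o1, o2, o3; try congruence; unfold relabel, Rsum2; simpl; ring.
Qed.

End Relabel.

Lemma party_eqb_refl X : party_eqb X X = true.
Proof. destruct X; reflexivity. Qed.

Lemma party_eqb_neq X Y : X <> Y -> party_eqb X Y = false.
Proof. destruct X, Y; simpl; congruence. Qed.

Lemma scheme_prob_ordered psi s i1 i2 i3 : valid_scheme s ->
  scheme_prob psi s i1 i2 i3 =
  Cnorm2 (amp3 (relabel (ord1 s) (ord2 s) (ord3 s) psi) (bas1 s i1) (bas2 s i1 i2) (bas3 s i1 i2 i3)).
Proof.
  intros [H12 [H13 [H23 _]]]. unfold scheme_prob.
  rewrite (amp3_relabel _ _ _ H12 H13 H23 psi (scheme_vec s i1 i2 i3)).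
  unfold scheme_vec. rewrite !party_eqb_refl, (party_eqb_neq _ _ (not_eq_sym H12)),
    (party_eqb_neq _ _ (not_eq_sym H13)), (party_eqb_neq _ _ (not_eq_sym H23)).
  reflexivity.
Qed.

Definition outcome_list (p : bool -> bool -> bool -> R) : list R :=
  p false false false :: p false false true :: p false true false :: p false true true ::
  p true false false :: p true false true :: p true true false :: p true true true :: nil.

Lemma scheme_prob_total psi s : is_unit3 psi -> valid_scheme s ->
  sum_list (outcome_list (scheme_prob psi s)) = 1.
Proof.
  intros Hu Hs. pose proof Hs as [H12 [H13 [H23 [B1 [B2 B3]]]]].
  pose proof (is_unit3_relabel _ _ _ H12 H13 H23 psi Hu) as Hu'. unfold is_unit3 in Hu'.
  rewrite <- Hu', <- (outcome_probs_total _ _ _ _ B1 B2 B3).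
  unfold outcome_list, sum_list, Rsum2. simpl. rewrite !(scheme_prob_ordered psi s) by exact Hs.
  ring.
Qed.

Lemma shannon3_sum_xlnx p : shannon3 p = - sum_xlnx (outcome_list p) / ln 2.
Proof.
  pose proof ln2_pos. unfold shannon3, Rsum2, outcome_list, sum_xlnx. simpl.
  rewrite !xlog2x_xlnx. field. lra.
Qed.

Lemma scheme_vec_unit s i1 i2 i3 Y : valid_scheme s ->
  Rsum2 (fun k => Cnorm2 (scheme_vec s i1 i2 i3 Y k)) = 1.
Proof.
  intros [_ [_ [_ [B1 [B2 B3]]]]]. unfold scheme_vec.
  destruct (party_eqb Y (ord1 s)); [| destruct (party_eqb Y (ord2 s))]; apply onb_unit; auto.
Qed.

Definition second (X : party) : party := match X with PA => PB | PB => PA | PC => PA end.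
Definition third (X : party) : party := match X with PA => PC | PB => PC | PC => PB end.
Definition measured_first (X : party) (psi : state3) : state3 := relabel X (second X) (third X) psi.

Lemma measured_first_distinct X : X <> second X /\ X <> third X /\ second X <> third X.
Proof. destruct X; simpl; repeat split; congruence. Qed.

Lemma locc_average_measured_first psi X x :
  locc_average psi X x = locc_average (measured_first X psi) PA x.
Proof. destruct X; reflexivity. Qed.

Lemma is_unit3_measured_first X psi : is_unit3 psi -> is_unit3 (measured_first X psi).
Proof.
  destruct (measured_first_distinct X) as [H12 [H13 H23]]. apply is_unit3_relabel; assumption.
Qed.

Lemma scheme_prob_le_max_eig psi s X i1 i2 i3 : is_unit3 psi -> valid_scheme s ->
  scheme_prob psi s i1 i2 i3 <= (1 + bloch (rhoB (measured_first X psi))) / 2.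
Proof.
  intros Hu Hs. destruct (measured_first_distinct X) as [H12 [H13 H23]].
  unfold scheme_prob.
  rewrite (amp3_relabel _ _ _ H12 H13 H23 psi (scheme_vec s i1 i2 i3)).
  apply amp3_le_max_eig; try apply scheme_vec_unit; auto.
  apply is_unit3_measured_first; assumption.
Qed.

Lemma Cnorm2_nonneg z : 0 <= Cnorm2 z.
Proof. destruct z as [a b]. unfold Cnorm2. simpl. nra. Qed.

Lemma In_outcome_list (p : bool -> bool -> bool -> R) y :
  In y (outcome_list p) -> exists i1 i2 i3, y = p i1 i2 i3.
Proof.
  unfold outcome_list. simpl.
  intros [<- | [<- | [<- | [<- | [<- | [<- | [<- | [<- | []]]]]]]]]; eauto.
Qed.

Lemma qubit_entropy_unit_trace r :
  qubit_entropy 1 r = - (xlnx ((1 + r) / 2) + xlnx (1 - (1 + r) / 2)).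
Proof.
  unfold qubit_entropy, mix.
  replace ((1 + r) / 2 + (1 - r) / 2) with 1 by field.
  replace (1 - (1 + r) / 2) with ((1 - r) / 2) by field.
  rewrite xlnx_pos, ln_1 by lra. ring.
Qed.

Theorem theorem1 (psi : state3) (Hpsi : is_unit3 psi)
  (s : scheme) (Hs : valid_scheme s)
  (X : party) (x : bool -> qubit) (Hx : orthonormal_basis x) :
  locc_average psi X x <= scheme_entropy psi s.
Proof.
  rewrite locc_average_measured_first.
  set (phi := measured_first X psi).
  assert (Hphi : is_unit3 phi) by (apply is_unit3_measured_first; exact Hpsi).
  set (r := bloch (rhoB phi)).
  assert (Hr : 0 <= r <= 1) by (split; [apply bloch_nonneg | apply bloch_rhoB_le_1; exact Hphi]).
  pose proof (locc_average_le phi x Hx Hphi) as Hlocc.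
  fold r in Hlocc. rewrite qubit_entropy_unit_trace in Hlocc.
  assert (Hent : sum_xlnx (outcome_list (scheme_prob psi s))
                 <= xlnx ((1 + r) / 2) + xlnx (1 - (1 + r) / 2)).
  { apply entropy_ge_binary; [| apply scheme_prob_total; assumption | lra].
    intros y Hy. destruct (In_outcome_list _ _ Hy) as [i1 [i2 [i3 ->]]].
    split; [apply Cnorm2_nonneg |].
    apply scheme_prob_le_max_eig; assumption. }
  unfold scheme_entropy. rewrite shannon3_sum_xlnx.
  pose proof ln2_pos.
  apply Rle_trans with (1 := Hlocc).
  apply Rmult_le_compat_r; [left; apply Rinv_0_lt_compat |]; lra.
Qed.
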